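(* Let $n\ge 2$ and let $f$ be the $n$-ary operation on $\mathbb{Z}_8$ given by $f(\mathbf{x})=x_1x_2\cdots x_n\sum_{\alpha\in I_n}b_\alpha\mathbf{x}^\alpha$ with $b_\alpha\in\mathbb{Z}_8$. Then $f$ preserves the relation $Z$ if and only if every $b_\alpha$ is even.
   Context: $I_n$ is the set of all $n$-tuples $\alpha\in\{0,1,2\}^n$ with at most two nonzero components, and $\mathbf{x}^\alpha=x_1^{\alpha_1}\cdots x_n^{\alpha_n}$. $P_4$ is the power set of $\{1,2,3,4\}$. For $A\in P_4$, $\mathbf{g}^A\in\mathbb{Z}_8^{P_4}$ is the tuple with $B$-component $1$ if $A\subseteq B$ and $0$ otherwise. Every $\mathbf{u}\in\mathbb{Z}_8^{P_4}$ has a unique expression $\mathbf{u}=\sum_{A\in P_4}a_A\mathbf{g}^A$ with $a_A\in\mathbb{Z}_8$. $Z\subseteq \mathbb{Z}_8^{P_4}$ consists of all $\mathbf{u}$ whose coefficients satisfy: (Z1) $a_{\{2\}}\equiv 2a_{\{1\}}\pmod 4$ and $a_{\{4\}}\equiv 2a_{\{3\}}\pmod 4$; (Z2) $a_A\equiv 0\pmod 2$ whenever $|A|\ge 2$; (Z3) $a_A\equiv 0\pmod 4$ whenever $|A|\ge 2$ and $A\cap\{2,4\}\neq\emptyset$; (Z4) $a_A=0$ whenever $\{2,4\}\subseteq A$. An operation preserves $Z$ if applying it componentwise to elements of $Z$ yields an element of $Z$. *)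

From mathcomp Require Import all_boot all_order all_algebra.
Set Implicit Arguments. Unset Strict Implicit. Unset Printing Implicit Defensive.
Import GRing.Theory.
Local Open Scope ring_scope.

(* The ground set {1,2,3,4} is represented by 'I_4 with k+1 ↦ k. *)
Definition e1 : 'I_4 := @Ordinal 4 0 isT.
Definition e2 : 'I_4 := @Ordinal 4 1 isT.
Definition e3 : 'I_4 := @Ordinal 4 2 isT.
Definition e4 : 'I_4 := @Ordinal 4 3 isT.

Definition vecZ := {ffun {set 'I_4} -> 'Z_8}.

Definition gvec (A : {set 'I_4}) : vecZ := [ffun B : {set 'I_4} => (A \subset B)%:R].

Definition Zcoeffs (a : {set 'I_4} -> 'Z_8) : Prop :=
  [/\ (val (a [set e2]) %% 4 = (2 * val (a [set e1])) %% 4)%N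
      /\ (val (a [set e4]) %% 4 = (2 * val (a [set e3])) %% 4)%N,
      (forall A : {set 'I_4}, (2 <= #|A|)%N -> (2 %| val (a A))%N),
      (forall A : {set 'I_4}, (2 <= #|A|)%N -> (e2 \in A) || (e4 \in A) ->
          (4 %| val (a A))%N)
    & (forall A : {set 'I_4}, e2 \in A -> e4 \in A -> a A = 0)].

(* u ∈ Z iff u = Σ_A a_A g^A with coefficients satisfying (Z1)-(Z4)
   (the expression is unique, so this is the paper's definition). *)
Definition inZ (u : vecZ) : Prop :=
  exists a : {ffun {set 'I_4} -> 'Z_8},
    (forall B, u B = \sum_(A : {set 'I_4}) a A * gvec A B) /\ Zcoeffs a.

Definition In_set (n : nat) : {set {ffun 'I_n -> 'I_3}} :=
  [set alpha : {ffun 'I_n -> 'I_3} | (#|[set i : 'I_n | alpha i != ord0]| <= 2)%N].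

Definition monom (n : nat) (alpha : {ffun 'I_n -> 'I_3}) (x : 'I_n -> 'Z_8) : 'Z_8 :=
  \prod_(i < n) x i ^+ (val (alpha i)).

Definition fop (n : nat) (b : {ffun 'I_n -> 'I_3} -> 'Z_8) (x : 'I_n -> 'Z_8) : 'Z_8 :=
  (\prod_(i < n) x i) * \sum_(alpha in In_set n) b alpha * monom alpha x.

Definition preservesZ (n : nat) (f : ('I_n -> 'Z_8) -> 'Z_8) : Prop :=
  forall u : 'I_n -> vecZ, (forall i, inZ (u i)) ->
    inZ [ffun B : {set 'I_4} => f (fun i => u i B)].

From mathcomp Require Import all_boot all_order all_algebra ring zify.
Import GRing.Theory.
Local Open Scope ring_scope.

(** If every [b_alpha] is even, write [f = 2 h] with [h] a polynomial. Let [Y]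
    be the set of vectors whose coefficients [a_A] satisfy [4 a_A = 0] when [A]
    meets {2,4} and [2 a_A = 0] when [A] contains {2,4}. As [g^A g^C = g^(A u C)],
    [Y] is a subring of [Z_8^P_4]; it contains [Z] and [2 Y] is contained in [Z],
    so [f] maps [Z^n] into [Z].

    Conversely, setting all variables but [x_k, x_l] to 1 turns [f] into the
    binary operation [sum_e B_e x^(e.1+1) y^(e.2+1)], where [B_e] sums the
    [b_alpha] with [(alpha_k, alpha_l) = e]; it still preserves [Z]. Applying it
    to the vectors [c + s (g^{1} + 2 g^{2}) + t (g^{3} + 2 g^{4})] of [Z] and
    testing the results against three linear relations valid on [Z] (consequences
    of (Z1), (Z3), (Z4)) gives [4 B_e = 0] for every [e]. An exponent [alpha]
    supported in {k, l} differs from the other members of its class by having a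
    smaller support, so [4 b_alpha = 0] follows by downward induction on the size
    of the support. *)

Ltac case_Z8 := case=> [[|[|[|[|[|[|[|[|?]]]]]]]] ?] //.

Lemma Z8_char : (8 : 'Z_8) = 0.
Proof. exact/val_inj. Qed.

Lemma Z8_dvd2 (x : 'Z_8) : (2 %| val x)%N = (4 * x == 0).
Proof. by move: x; case_Z8. Qed.

Lemma Z8_dvd4 (x : 'Z_8) : (4 %| val x)%N = (2 * x == 0).
Proof. by move: x; case_Z8. Qed.

Lemma Z8_modn4 (x y : 'Z_8) :
  (val x %% 4 == 2 * val y %% 4)%N = (2 * (x - 2 * y) == 0).
Proof. by move: x y; do 2!case_Z8. Qed.

Lemma Z8_halfK (x : 'Z_8) : (2 %| val x)%N -> x = 2 * (val x %/ 2)%:R.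
Proof. by move: x; case_Z8 => _; apply/val_inj. Qed.

Lemma Z8_mul4 (x y : 'Z_8) : 4 * x = 0 -> 4 * y = 0 -> 2 * (x * y) = 0.
Proof. move=> /eqP hx /eqP hy; apply/eqP; by move: x y hx hy; do 2!case_Z8. Qed.

Lemma Z8_modn4_mul4 (x y : 'Z_8) : (val x %% 4 = 2 * val y %% 4)%N -> 4 * x = 0.
Proof.
move=> /eqP; rewrite Z8_modn4 => /eqP h.
have -> : 4 * x = 2 * (2 * (x - 2 * y)) + 8 * y by ring.
by rewrite h mulr0 Z8_char mul0r addr0.
Qed.

Lemma set1_eq0 (T : finType) (x : T) : ([set x] == set0) = false.
Proof. by apply/negbTE/set0Pn; exists x; rewrite inE. Qed.

Lemma ord_eqF (n : nat) (i j : 'I_n) : val i != val j -> (i == j) = false.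
Proof. by move=> h; apply/negbTE; apply: contra h => /eqP ->. Qed.

Lemma gvec0 (B : {set 'I_4}) : gvec set0 B = 1.
Proof. by rewrite ffunE sub0set. Qed.

Lemma gvec1 (x : 'I_4) (B : {set 'I_4}) : gvec [set x] B = (x \in B)%:R.
Proof. by rewrite ffunE sub1set. Qed.

Lemma gvecU (A C B : {set 'I_4}) : gvec A B * gvec C B = gvec (A :|: C) B.
Proof.
rewrite !ffunE subUset.
by case: (A \subset B); case: (C \subset B); rewrite ?mul1r ?mul0r.
Qed.

Lemma sum_gvec (a : {set 'I_4} -> 'Z_8) (B : {set 'I_4}) :
  \sum_(A : {set 'I_4}) a A * gvec A B = \sum_(A : {set 'I_4} | A \subset B) a A.
Proof.
rewrite [RHS]big_mkcond; apply: eq_bigr => A _; rewrite ffunE.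
by case: (A \subset B); rewrite ?mulr1 ?mulr0.
Qed.

Lemma sum_subsetU1 (T : finType) (V : nmodType) (F : {set T} -> V)
    (x : T) (S : {set T}) : x \notin S ->
  \sum_(A : {set T} | A \subset x |: S) F A =
    \sum_(A : {set T} | A \subset S) F A + \sum_(A : {set T} | A \subset S) F (x |: A).
Proof.
move=> xS; rewrite (bigID (fun A : {set T} => x \in A)) /= addrC; congr (_ + _).
  by apply: eq_bigl => A; rewrite -subsetD1 setU1K.
rewrite (reindex_onto (fun A : {set T} => x |: A) (fun A : {set T} => A :\ x)) /=;
  last by move=> A /andP[_ /setD1K].
apply: eq_bigl => A; rewrite setU11 andbT.
have [xA|xA] := boolP (x \in A).
  have -> : (A \subset S) = false by apply: contraNF xS => /subsetP; apply.
  have /setUidPr -> : [set x] \subset A by rewrite sub1set.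
  suff -> : (A :\ x == A) = false by rewrite andbF.
  by apply/negbTE/eqP => /setP/(_ x); rewrite !inE eqxx xA.
rewrite setU1K // eqxx andbT subUset sub1set setU11 /=.
by rewrite -[in RHS](setU1K xS) subsetD1 xA andbT.
Qed.

Lemma sum_subset0 (T : finType) (V : nmodType) (F : {set T} -> V) :
  \sum_(A : {set T} | A \subset set0) F A = F set0.
Proof. by rewrite (big_pred1 set0) // => A; rewrite subset0. Qed.

Lemma sum_subset1 (T : finType) (V : nmodType) (F : {set T} -> V) (x : T) :
  \sum_(A : {set T} | A \subset [set x]) F A = F set0 + F [set x].
Proof.
by rewrite -[[set x] in LHS]setU0 sum_subsetU1 ?inE // !sum_subset0 setU0.
Qed.

Lemma sum_subset2 (T : finType) (V : nmodType) (F : {set T} -> V) (x y : T) :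
  x != y ->
  \sum_(A : {set T} | A \subset [set x; y]) F A =
    F set0 + F [set x] + F [set y] + F [set x; y].
Proof.
by move=> xy; rewrite sum_subsetU1 ?inE // !sum_subset1 setU0 addrACA addrA.
Qed.

Lemma inZ_relZ1 {w : vecZ} : inZ w -> 2 * (w [set e2] - 2 * w [set e1] + w set0) = 0.
Proof.
case=> a [wE [[/eqP Z12 _] _ _ _]]; move: Z12; rewrite Z8_modn4 => /eqP <-.
by rewrite !wE !sum_gvec !sum_subset1 sum_subset0; ring.
Qed.

Lemma inZ_relZ3 {w : vecZ} :
  inZ w -> 2 * (w [set e1; e4] - w [set e1] - w [set e4] + w set0) = 0.
Proof.
case=> a [wE [_ _ Z3 _]]; have /eqP <- : 2 * a [set e1; e4] == 0.
  by rewrite -Z8_dvd4 Z3 ?cards2 // !inE eqxx orbT.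
by rewrite !wE !sum_gvec sum_subset2 // !sum_subset1 sum_subset0; ring.
Qed.

Lemma inZ_relZ4 {w : vecZ} : inZ w -> w [set e2; e4] - w [set e2] - w [set e4] + w set0 = 0.
Proof.
case=> a [wE [_ _ _ Z4]]; rewrite -(Z4 [set e2; e4]) ?inE ?eqxx ?orbT //.
by rewrite !wE !sum_gvec sum_subset2 // !sum_subset1 sum_subset0; ring.
Qed.

(** * Sufficiency *)

Definition Yentry (A : {set 'I_4}) (x : 'Z_8) : Prop :=
  ((e2 \in A) || (e4 \in A) -> 4 * x = 0) /\ (e2 \in A -> e4 \in A -> 2 * x = 0).

Definition inY (v : {set 'I_4} -> 'Z_8) : Prop :=
  exists a : {set 'I_4} -> 'Z_8,
    (forall B, v B = \sum_(A : {set 'I_4}) a A * gvec A B) /\ forall A, Yentry A (a A).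

Lemma Yentry0 (A : {set 'I_4}) : Yentry A 0.
Proof. by split=> *; rewrite mulr0. Qed.

Lemma YentryD (A : {set 'I_4}) (x y : 'Z_8) :
  Yentry A x -> Yentry A y -> Yentry A (x + y).
Proof.
move=> [x4 x2] [y4 y2]; split=> [h|h2 h4]; rewrite mulrDr; first by rewrite x4 ?y4 ?addr0.
by rewrite x2 ?y2 ?addr0.
Qed.

Lemma Yentry_sum (A : {set 'I_4}) (I : finType) (P : pred I) (F : I -> 'Z_8) :
  (forall i, P i -> Yentry A (F i)) -> Yentry A (\sum_(i | P i) F i).
Proof. by move=> YF; apply: big_ind => //; [apply: Yentry0 | apply: YentryD]. Qed.

Lemma YentryM (A C : {set 'I_4}) (x y : 'Z_8) :
  Yentry A x -> Yentry C y -> Yentry (A :|: C) (x * y).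
Proof.
rewrite /Yentry !inE.
case: (e2 \in A); case: (e4 \in A); case: (e2 \in C); case: (e4 \in C) => /=;
  move=> [x4 x2] [y4 y2]; split=> // *;
  first [ by rewrite mulrA x2 ?mul0r | by rewrite mulrCA y2 ?mulr0
        | by rewrite mulrA x4 ?mul0r | by rewrite mulrCA y4 ?mulr0
        | exact: Z8_mul4 (x4 _) (y4 _) ].
Qed.

Lemma inY_ext {v w : {set 'I_4} -> 'Z_8} : inY v -> (forall B, v B = w B) -> inY w.
Proof. by move=> [a [vE Ya]] vw; exists a; split=> // B; rewrite -vw. Qed.

Lemma inY_const (c : 'Z_8) : inY (fun _ => c).
Proof.
exists (fun A => if A == set0 then c else 0); split=> [B|A].
  rewrite (bigD1 set0) //= eqxx gvec0 mulr1 big1 ?addr0 // => A /negbTE ->.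
  by rewrite mul0r.
case: eqP => [->|_]; last exact: Yentry0.
by split; rewrite !inE.
Qed.

Lemma inY_add {v w : {set 'I_4} -> 'Z_8} : inY v -> inY w -> inY (fun B => v B + w B).
Proof.
move=> [a [vE Ya]] [c [wE Yc]]; exists (fun A => a A + c A); split=> [B|A].
  by rewrite vE wE -big_split; apply: eq_bigr => A _; rewrite mulrDl.
exact: YentryD.
Qed.

Lemma inY_mul {v w : {set 'I_4} -> 'Z_8} : inY v -> inY w -> inY (fun B => v B * w B).
Proof.
move=> [a [vE Ya]] [c [wE Yc]].
exists (fun D => \sum_(p : {set 'I_4} * {set 'I_4} | p.1 :|: p.2 == D) a p.1 * c p.2).
split=> [B|D].
  rewrite vE wE big_distrlr pair_big /=.
  rewrite (partition_big (fun p : {set 'I_4} * {set 'I_4} => p.1 :|: p.2) xpredT) //=.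
  apply: eq_bigr => D _; rewrite mulr_suml; apply: eq_bigr => p /eqP <-.
  by rewrite mulrACA gvecU.
by apply: Yentry_sum => p /eqP <-; apply: YentryM.
Qed.

Lemma inY_sum (I : Type) (r : seq I) (P : pred I) (F : I -> {set 'I_4} -> 'Z_8) :
  (forall i, P i -> inY (F i)) -> inY (fun B => \sum_(i <- r | P i) F i B).
Proof.
move=> YF; elim: r => [|i r IH].
  by apply: inY_ext (inY_const 0) _ => B; rewrite big_nil.
have Yi : inY (fun B => if P i then F i B else 0).
  by case: (boolP (P i)) => Pi; [apply: YF | apply: inY_const].
by apply: inY_ext (inY_add Yi IH) _ => B; rewrite big_cons; case: (P i); rewrite ?add0r.
Qed.

Lemma inY_prod (I : Type) (r : seq I) (P : pred I) (F : I -> {set 'I_4} -> 'Z_8) :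
  (forall i, P i -> inY (F i)) -> inY (fun B => \prod_(i <- r | P i) F i B).
Proof.
move=> YF; elim: r => [|i r IH].
  by apply: inY_ext (inY_const 1) _ => B; rewrite big_nil.
have Yi : inY (fun B => if P i then F i B else 1).
  by case: (boolP (P i)) => Pi; [apply: YF | apply: inY_const].
by apply: inY_ext (inY_mul Yi IH) _ => B; rewrite big_cons; case: (P i); rewrite ?mul1r.
Qed.

Lemma inY_exp {v : {set 'I_4} -> 'Z_8} (k : nat) : inY v -> inY (fun B => v B ^+ k).
Proof.
move=> Yv; elim: k => [|k IH]; first by apply: inY_ext (inY_const 1) _ => B; rewrite expr0.
by apply: inY_ext (inY_mul Yv IH) _ => B; rewrite exprS.
Qed.

Lemma inZ_inY (u : vecZ) : inZ u -> inY u.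
Proof.
move=> [a [uE [[Z12 Z34] Z2 _ Z4]]]; exists a; split=> // A.
split=> [A24|A2 A4]; last by rewrite Z4 ?mulr0.
have [A_ge2|A_lt2] := leqP 2 #|A|; first by apply/eqP; rewrite -Z8_dvd2 Z2.
have /cards1P [x Ax] : #|A| == 1%N.
  rewrite eqn_leq -ltnS A_lt2 card_gt0 /=.
  by apply/set0Pn; case/orP: A24 => h; [exists e2 | exists e4].
move: A24; rewrite Ax !inE => /orP[] /eqP <-.
  exact: Z8_modn4_mul4 Z12.
exact: Z8_modn4_mul4 Z34.
Qed.

Lemma inY_double (v : {set 'I_4} -> 'Z_8) : inY v -> inZ [ffun B => 2 * v B].
Proof.
move=> [a [vE Ya]]; exists [ffun A : {set 'I_4} => 2 * a A]; split.
  move=> B; rewrite ffunE vE mulr_sumr; apply: eq_bigr => A _.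
  by rewrite mulrA; congr (_ * _); rewrite ffunE.
have mul4_2 x : 4 * (2 * x) = 0 :> 'Z_8.
  by rewrite -[RHS](mul0r x) -Z8_char; ring.
split=> [|A _|A _ A24|A A2 A4]; rewrite ?ffunE.
- have Z1 x y : 4 * x = 0 -> 2 * (2 * x - 2 * (2 * y)) = 0 :> 'Z_8.
    by move=> x4; transitivity (4 * x - 4 * (2 * y)); [ring | rewrite x4 mul4_2 subr0].
  by split; apply/eqP; rewrite Z8_modn4; apply/eqP/Z1/(Ya _).1; rewrite !inE eqxx ?orbT.
- by rewrite Z8_dvd2 mul4_2.
- by rewrite Z8_dvd4; apply/eqP; transitivity (4 * a A); [ring | apply: (Ya A).1].
- by rewrite (Ya A).2.
Qed.

Lemma preservesZ_even (n : nat) (b : {ffun 'I_n -> 'I_3} -> 'Z_8) :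
  (forall alpha, alpha \in In_set n -> (2 %| val (b alpha))%N) -> preservesZ (fop b).
Proof.
move=> b_even u Zu; pose b' alpha : 'Z_8 := (val (b alpha) %/ 2)%:R.
pose h B := \prod_(i < n) u i B * \sum_(alpha in In_set n) b' alpha * monom alpha (u^~ B).
have -> : [ffun B => fop b (u^~ B)] = [ffun B => 2 * h B].
  apply/ffunP => B; rewrite !ffunE /fop /h mulrCA; congr (_ * _); rewrite mulr_sumr.
  by apply: eq_bigr => alpha /b_even /Z8_halfK {1}->; rewrite mulrA.
have Yu i : inY (u i) by apply: inZ_inY.
apply/inY_double/inY_mul; first exact: inY_prod.
apply: inY_sum => alpha _; apply: inY_mul; first exact: inY_const.
by apply: inY_prod => i _; apply: inY_exp.
Qed.

(** * Necessity for binary operations *)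

(* For [p = (c, s, t)], [Lvec p = c g^{} + s (g^{1} + 2 g^{2}) + t (g^{3} + 2 g^{4})],
   whose value at [B] is affine in the grid coordinates [(gridX B, gridY B)]. *)
Definition gridX (B : {set 'I_4}) : 'Z_8 := (e1 \in B)%:R + 2 * (e2 \in B)%:R.
Definition gridY (B : {set 'I_4}) : 'Z_8 := (e3 \in B)%:R + 2 * (e4 \in B)%:R.

Definition affine (p : 'Z_8 * 'Z_8 * 'Z_8) (X Y : 'Z_8) : 'Z_8 := p.1.1 + p.1.2 * X + p.2 * Y.

Definition Lvec (p : 'Z_8 * 'Z_8 * 'Z_8) : vecZ :=
  [ffun B => affine p (gridX B) (gridY B)].

Definition Lvec_coef (p : 'Z_8 * 'Z_8 * 'Z_8) : {ffun {set 'I_4} -> 'Z_8} :=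
  [ffun A => (A == set0)%:R * p.1.1 + (A == [set e1])%:R * p.1.2
    + (A == [set e2])%:R * (2 * p.1.2) + (A == [set e3])%:R * p.2
    + (A == [set e4])%:R * (2 * p.2)].

Lemma Lvec_coef_card2 (p : 'Z_8 * 'Z_8 * 'Z_8) (A : {set 'I_4}) :
  (2 <= #|A|)%N -> Lvec_coef p A = 0.
Proof.
move=> A2; have small (B : {set 'I_4}) : (#|B| <= 1)%N -> (A == B) = false.
  by move=> B1; apply: contraTF A2 => /eqP ->; rewrite -ltnNge ltnS.
by rewrite ffunE !small ?cards0 ?cards1 // !mul0r !addr0.
Qed.

Lemma inZ_Lvec (p : 'Z_8 * 'Z_8 * 'Z_8) : inZ (Lvec p).
Proof.
exists (Lvec_coef p); split=> [B|].
  have atomE (A0 : {set 'I_4}) (y : 'Z_8) :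
    \sum_(A : {set 'I_4}) (A == A0)%:R * y * gvec A B = y * gvec A0 B.
    rewrite (bigD1 A0) //= eqxx mul1r big1 ?addr0 // => A /negbTE ->.
    by rewrite !mul0r.
  under eq_bigr do rewrite ffunE !mulrDl.
  rewrite !big_split /= !atomE gvec0 !gvec1 /Lvec ffunE /affine /gridX /gridY; ring.
split=> [|A A2|A A2 _|A A2 A4].
- rewrite !ffunE !set1_eq0 !(inj_eq set1_inj) !eqxx !ord_eqF //.
  rewrite !(mul0r, mul1r, add0r, addr0).
  by split; apply/eqP; rewrite Z8_modn4 subrr mulr0.
- by rewrite Lvec_coef_card2.
- by rewrite Lvec_coef_card2.
- have sub24 : [set e2; e4] \subset A.
    by apply/subsetP => x; rewrite !inE => /orP[] /eqP ->.
  by rewrite Lvec_coef_card2 //; apply: leq_trans (subset_leq_card sub24); rewrite cards2.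
Qed.

Definition preservesZ2 (g : 'Z_8 -> 'Z_8 -> 'Z_8) : Prop :=
  forall u1 u2 : vecZ, inZ u1 -> inZ u2 -> inZ [ffun B => g (u1 B) (u2 B)].

Inductive Zrel := RelZ1 | RelZ3 | RelZ4.

(* The relations [inZ_relZ*] read on the grid: the sets {}, {1}, {2}, {4},
   {1,4}, {2,4} have grid coordinates (0,0), (1,0), (2,0), (0,2), (1,2), (2,2). *)
Definition stencil (r : Zrel) : seq ('Z_8 * ('Z_8 * 'Z_8)) :=
  match r with
  | RelZ1 => [:: (2, (2, 0)); (-4, (1, 0)); (2, (0, 0))]
  | RelZ3 => [:: (2, (1, 2)); (-2, (1, 0)); (-2, (0, 2)); (2, (0, 0))]
  | RelZ4 => [:: (1, (2, 2)); (-1, (2, 0)); (-1, (0, 2)); (1, (0, 0))]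
  end.

Definition probe := (Zrel * ('Z_8 * 'Z_8 * 'Z_8) * ('Z_8 * 'Z_8 * 'Z_8))%type.

Definition probe_val (t : probe) (g : 'Z_8 -> 'Z_8 -> 'Z_8) : 'Z_8 :=
  \sum_(q <- stencil t.1.1) q.1 * g (affine t.1.2 q.2.1 q.2.2) (affine t.2 q.2.1 q.2.2).

Lemma probe_val_eq0 (g : 'Z_8 -> 'Z_8 -> 'Z_8) (t : probe) :
  preservesZ2 g -> probe_val t g = 0.
Proof.
case: t => [[r p1] p2] gZ; have Zw := gZ _ _ (inZ_Lvec p1) (inZ_Lvec p2).
case: r; [move: (inZ_relZ1 Zw) | move: (inZ_relZ3 Zw) | move: (inZ_relZ4 Zw)];
  rewrite !ffunE /gridX /gridY !inE !eqxx !ord_eqF // ?(orbT, orbF);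
  rewrite !(mulr0n, mulr1n, mulr0, mulr1, add0r, addr0) => rel;
  rewrite -{}rel /probe_val !big_cons big_nil /=; ring.
Qed.

Definition mono (e : 'I_3 * 'I_3) (x y : 'Z_8) : 'Z_8 := x ^+ e.1.+1 * y ^+ e.2.+1.

Definition binop (B : 'I_3 * 'I_3 -> 'Z_8) (x y : 'Z_8) : 'Z_8 := \sum_e B e * mono e x y.

Lemma probe_val_binop (t : probe) (B : 'I_3 * 'I_3 -> 'Z_8) :
  probe_val t (binop B) = \sum_e B e * probe_val t (mono e).
Proof.
rewrite /probe_val; under eq_bigr do rewrite /binop mulr_sumr.
rewrite exchange_big; apply: eq_bigr => e _; rewrite mulr_sumr.
by apply: eq_bigr => q _; rewrite mulrCA.
Qed.

(* Probes whose sum sees only the coefficient of [mono e]; as every probe takes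
   the values 0 and 4 on monomials, no signs are needed. *)
Definition probes_for (e : 'I_3 * 'I_3) : seq probe :=
  let T00 := (RelZ4, (0, 0, 1), (0, 1, 0)) in
  let T02 := (RelZ4, (0, 0, 1), (1, 1, 0)) in
  let T20 := (RelZ4, (1, 0, 1), (0, 1, 0)) in
  let T22 := (RelZ4, (1, 0, 1), (1, 1, 0)) in
  let T01 := (RelZ3, (0, 0, 1), (0, 1, 0)) in
  let T10 := (RelZ3, (0, 1, 0), (0, 0, 1)) in
  let T21 := (RelZ3, (0, 1, 1), (1, 0, 0)) in
  let T12 := (RelZ3, (1, 0, 0), (0, 1, 1)) in
  let T11 := (RelZ1, (1, 0, 0), (1, 1, 0)) in
  match val e.1, val e.2 with
  | 0, 0 => [:: T00]
  | 0, 1 => [:: T01; T02]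
  | 0, _ => [:: T02; T00]
  | 1, 0 => [:: T10; T20]
  | 1, 1 => [:: T11; T01; T21; T22]
  | 1, _ => [:: T12; T22; T20]
  | _, 0 => [:: T20; T00]
  | _, 1 => [:: T21; T22; T02]
  | _, _ => [:: T22; T02; T20; T00]
  end.

Lemma probes_forE (e e' : 'I_3 * 'I_3) :
  \sum_(t <- probes_for e) probe_val t (mono e') = 4 * (e' == e)%:R.
Proof.
case: e e' => [[[|[|[|?]]] ?] [[|[|[|?]]] ?]] [[[|[|[|?]]] ?] [[|[|[|?]]] ?]] //.
all: by apply/eqP; rewrite /probe_val !unlock; vm_compute.
Qed.

Lemma binop_coef4 (B : 'I_3 * 'I_3 -> 'Z_8) :
  preservesZ2 (binop B) -> forall e, 4 * B e = 0.
Proof.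
move=> BZ e.
have -> : 4 * B e = \sum_e' B e' * \sum_(t <- probes_for e) probe_val t (mono e').
  under eq_bigr do rewrite probes_forE.
  rewrite (bigD1 e) //= eqxx mulr1 mulrC big1 ?addr0 // => e' /negbTE ->.
  by rewrite mulr0n !mulr0.
under eq_bigr do rewrite mulr_sumr.
rewrite exchange_big; under eq_bigr do rewrite -probe_val_binop probe_val_eq0 //.
exact: big1_eq.
Qed.

(** * Reduction to two variables *)

Lemma prod_pair {R : comPzSemiRingType} {n : nat} {k l : 'I_n} {F : 'I_n -> R} : k != l ->
  (forall m, m != k -> m != l -> F m = 1) -> \prod_i F i = F k * F l.
Proof.
move=> kl F1; rewrite (bigD1 k) //= (bigD1 l) 1?eq_sym //=.
by rewrite big1 ?mulr1 // => m /andP[mk ml]; apply: F1.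
Qed.

Section Support.

Context {n : nat}.

Definition supp (alpha : {ffun 'I_n -> 'I_3}) : {set 'I_n} := [set i | alpha i != ord0].

Lemma supp_cover {alpha : {ffun 'I_n -> 'I_3}} : (1 < n)%N -> (#|supp alpha| <= 2)%N ->
  exists k l, k != l /\ supp alpha \subset [set k; l].
Proof.
move=> n2 s2; pose i0 : 'I_n := Ordinal (ltnW n2); pose i1 : 'I_n := Ordinal n2.
have [S0|[k kS]] := set_0Vmem (supp alpha).
  by exists i0, i1; rewrite S0 sub0set.
have [S1|[l lS]] := set_0Vmem (supp alpha :\ k).
  exists k, (if k == i0 then i1 else i0); split.
    by case: (eqVneq k i0) => [->|ki0]; rewrite ?eqxx // (negbTE ki0) eq_sym.
  apply/subsetP => i iS; rewrite !inE; case: (eqVneq i k) => //= ik.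
  by move/setP/(_ i): S1; rewrite in_setD1 ik iS in_set0.
move: lS; rewrite in_setD1 => /andP[lk lS]; exists k, l; split; first by rewrite eq_sym.
have sub : [set k; l] \subset supp alpha by apply/subsetP => i /set2P [] ->.
have /eqP <- : [set k; l] == supp alpha by rewrite eqEcard sub cards2 eq_sym lk.
exact: subxx.
Qed.

Lemma supp_proper {alpha beta : {ffun 'I_n -> 'I_3}} {k l : 'I_n} :
  supp alpha \subset [set k; l] -> beta k = alpha k -> beta l = alpha l ->
  beta != alpha -> supp alpha \proper supp beta.
Proof.
move=> sub bk bl ne.
have same i : i \in [set k; l] -> beta i = alpha i by rewrite !inE => /orP[] /eqP ->.
have [z bz] : exists z, beta z != alpha z.
  case: (pickP (fun z => beta z != alpha z)) => [z bz|h]; first by exists z.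
  by case/eqP: ne; apply/ffunP => i; apply/eqP/negbFE/h.
have zkl : z \notin [set k; l] by apply: contra bz => /same ->.
have za : z \notin supp alpha by apply: contra zkl; apply: (subsetP sub).
have az : alpha z = ord0 by move: za; rewrite inE negbK => /eqP.
rewrite properE; apply/andP; split.
  apply/subsetP => i ia; rewrite inE same ?(subsetP sub) //.
  by move: ia; rewrite inE.
by apply/subsetPn; exists z => //; rewrite inE -az.
Qed.

End Support.

Section Reduction.

Context {n : nat} (b : {ffun 'I_n -> 'I_3} -> 'Z_8).

Definition pair_coef (k l : 'I_n) (e : 'I_3 * 'I_3) : 'Z_8 :=
  \sum_(alpha in In_set n | (alpha k, alpha l) == e) b alpha.

Lemma fop_pair (k l : 'I_n) (x : 'I_n -> 'Z_8) : k != l ->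
  (forall m, m != k -> m != l -> x m = 1) ->
  fop b x = binop (pair_coef k l) (x k) (x l).
Proof.
move=> kl x1; rewrite /fop /binop (prod_pair kl x1) mulr_sumr.
rewrite (partition_big (fun alpha : {ffun 'I_n -> 'I_3} => (alpha k, alpha l)) xpredT) //=.
apply: eq_bigr => e _; rewrite mulr_suml; apply: eq_bigr => alpha /andP[_ /eqP <-].
rewrite /monom (prod_pair (F := fun i => x i ^+ alpha i) kl); last first.
  by move=> m mk ml; rewrite x1 // expr1n.
by rewrite /mono /= !exprS; ring.
Qed.

Lemma preservesZ_pair {k l : 'I_n} :
  preservesZ (fop b) -> k != l -> preservesZ2 (binop (pair_coef k l)).
Proof.
move=> fZ kl u1 u2 Z1 Z2.
pose u m := if m == k then u1 else if m == l then u2 else Lvec (1, 0, 0).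
have Zu m : inZ (u m).
  by rewrite /u; case: (m == k) => //; case: (m == l) => //; apply: inZ_Lvec.
have -> : [ffun B => binop (pair_coef k l) (u1 B) (u2 B)] = [ffun B => fop b (u^~ B)].
  apply/ffunP => B; rewrite !ffunE (fop_pair k l) //.
    by rewrite /u eqxx eq_sym (negbTE kl) eqxx.
  move=> m mk ml; rewrite /u (negbTE mk) (negbTE ml) ffunE /affine.
  by rewrite !mul0r !addr0.
exact: fZ.
Qed.

Lemma coef4_of_pair_coef4 : (1 < n)%N ->
  (forall k l e, k != l -> 4 * pair_coef k l e = 0) ->
  forall alpha, alpha \in In_set n -> 4 * b alpha = 0.
Proof.
move=> n2 H alpha; have [m] := ubnP (3 - #|supp alpha|).
elim: m alpha => // m IH alpha lt_m In_alpha.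
have s2 : (#|supp alpha| <= 2)%N by rewrite inE in In_alpha.
have [k [l [kl sub]]] := supp_cover n2 s2.
have := H k l (alpha k, alpha l) kl.
rewrite /pair_coef (bigD1 alpha) /=; last by rewrite In_alpha eqxx.
rewrite mulrDr mulr_sumr big1 ?addr0 // => beta /andP[/andP[In_beta /eqP [bk bl]] ne].
apply: IH In_beta; have := proper_card (supp_proper sub bk bl ne); lia.
Qed.

End Reduction.

Theorem theorem3p1 (n : nat) (b : {ffun 'I_n -> 'I_3} -> 'Z_8) :
  (2 <= n)%N ->
  (preservesZ (fop b) <->
   (forall alpha, alpha \in In_set n -> (2 %| val (b alpha))%N)).
Proof.
move=> n2; split; last exact: preservesZ_even.
move=> fZ alpha In_alpha; rewrite Z8_dvd2; apply/eqP.
apply: (coef4_of_pair_coef4 b n2 _ _ In_alpha) => k l e kl.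
exact: binop_coef4 (preservesZ_pair b fZ kl) e.
Qed.
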